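(* Consider the FlexPD-G iterates described in the context with $\alpha,\beta>0$ and integer $T\ge1$, and let $c_1=1+\alpha\rho(B)$. Then for any $\bar p,\bar q>1$ and every $k\ge0$, \[\|x^{k+1,T-1}-x^*\|^2+\frac{\alpha}{\beta}\|\lambda^k-\lambda^*\|^2+\alpha\rho(B)\|x^k-x^*\|^2\le\Gamma_G^{T-1}\Big(c_1\|x^k-x^*\|^2+\frac{\alpha}{\beta}\|\lambda^k-\lambda^*\|^2\Big),\] where \[\Gamma_G=\max\Big\{\bar p(1+\alpha L)^2,\;1+\frac{\bar p\bar q\alpha\beta\rho(AA')}{\bar p-1},\;1+\frac{\bar p\bar q\alpha\rho(B)}{(\bar p-1)(\bar q-1)}\Big\}.\]
   Context: Setting: $n$ agents are connected by a connected undirected graph with edge set $\mathcal E$, $\epsilon=|\mathcal E|$. For $x\in\mathbb R^n$ let $f(x)=\sum_{i=1}^n f_i(x_i)$, where each $f_i:\mathbb R\to\mathbb R$ is twice differentiable with $m\le f_i''\le L$ for constants $0<m\le L$; $\nabla f(x)=(f_1'(x_1),\dots,f_n'(x_n))'$. $A\in\mathbb R^{\epsilon\times n}$ is the edge–node incidence matrix (null space spanned by the all-ones vector). $B\in\mathbb R^{n\times n}$ is symmetric positive semidefinite with the same null space as $A$, off-diagonal entries nonzero only on edges, and $\rho(B)<m$. $x^*$ is the unique minimizer of $f$ subject to $Ax=0$ and $\lambda^*$ a Lagrange multiplier with $\nabla f(x^* )+A'\lambda^*=0$, $Ax^*=0$, $Bx^*=0$, chosen in the column space of $A$. FlexPD-G: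 given $\alpha,\beta>0$, $T\ge1$, $x^0$ arbitrary, $\lambda^0=0$; for $k\ge0$: $x^{k+1,0}=x^k$; for $t=1,\dots,T$, $x^{k+1,t}=x^{k+1,t-1}-\alpha\nabla f(x^{k+1,t-1})-\alpha A'\lambda^k-\alpha Bx^k$; then $x^{k+1}=x^{k+1,T}$, $\lambda^{k+1}=\lambda^k+\beta Ax^{k+1}$. Notation: $\rho(S)$ largest eigenvalue of a symmetric matrix $S$; $\|\cdot\|$ Euclidean norm. *)

From HB Require Import structures.
From mathcomp Require Import all_boot all_order all_algebra.
From mathcomp Require Import all_classical all_reals all_analysis.
Set Implicit Arguments. Unset Strict Implicit. Unset Printing Implicit Defensive.
Import Order.TTheory GRing.Theory Num.Theory.
Local Open Scope ring_scope.

Section Defs.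
Variable R : realType.

Definition sqnorm (p : nat) (v : 'cV[R]_p) : R := \sum_(i < p) (v i 0) ^+ 2.

Definition is_rho (p : nat) (S : 'M[R]_p) (r : R) : Prop :=
  eigenvalue S r /\ (forall a, eigenvalue S a -> a <= r).

(* Graph on nodes 'I_n with eps edges; edge k joins (e k).1 and (e k).2
   (an arbitrary orientation, used for the incidence matrix). *)
Definition simple_edges (n eps : nat) (e : 'I_eps -> 'I_n * 'I_n) : Prop :=
  (forall k, (e k).1 != (e k).2) /\
  (forall k l, k != l -> e k <> e l /\ e k <> ((e l).2, (e l).1)).

Definition adj (n eps : nat) (e : 'I_eps -> 'I_n * 'I_n) : rel 'I_n :=
  fun i j => [exists k, (e k == (i, j)) || (e k == (j, i))].

Definition connected_graph (n eps : nat) (e : 'I_eps -> 'I_n * 'I_n) : Prop :=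
  forall i j, connect (adj e) i j.

Definition incidence (n eps : nat) (e : 'I_eps -> 'I_n * 'I_n) : 'M[R]_(eps, n) :=
  \matrix_(k, i) (if i == (e k).1 then 1 else if i == (e k).2 then -1 else 0).

Definition sumf (n : nat) (f : 'I_n -> R -> R) (x : 'cV[R]_n) : R :=
  \sum_(i < n) f i (x i 0).

Definition gradf (n : nat) (f : 'I_n -> R -> R) (x : 'cV[R]_n) : 'cV[R]_n :=
  \col_i (derive1 (f i) (x i 0)).

(* inner iterate x^{k+1,t} from (x^k, lambda^k) *)
Definition flex_inner (n eps : nat) (f : 'I_n -> R -> R) (A : 'M[R]_(eps, n))
  (B : 'M[R]_n) (alpha : R) (xk : 'cV[R]_n) (lk : 'cV[R]_eps) (t : nat) : 'cV[R]_n :=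
  iter t (fun y => y - alpha *: gradf f y - alpha *: (A^T *m lk) - alpha *: (B *m xk)) xk.

Definition flex_state (n eps : nat) (f : 'I_n -> R -> R) (A : 'M[R]_(eps, n))
  (B : 'M[R]_n) (alpha beta : R) (T : nat) (x0 : 'cV[R]_n) (k : nat)
  : 'cV[R]_n * 'cV[R]_eps :=
  iter k (fun s => let xn := flex_inner f A B alpha s.1 s.2 T in
                   (xn, s.2 + beta *: (A *m xn))) (x0, 0).

End Defs.

From HB Require Import structures.
From mathcomp Require Import all_boot all_order all_algebra.
From mathcomp Require Import all_classical all_reals all_analysis.
From mathcomp Require Import ring lra.
Import Order.TTheory GRing.Theory Num.Theory numFieldNormedType.Exports.
Set Implicit Arguments. Unset Strict Implicit. Unset Printing Implicit Defensive.
Local Open Scope classical_set_scope.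
Local Open Scope ring_scope.

(* Each inner FlexPD-G step moves the error [y - xstar] by a gradient step plus
   the fixed perturbation [- alpha (A^T (lk - lstar) + B (xk - xstar))], because
   [gradf f xstar = - A^T lstar] and [B xstar = 0].  Young's inequality with
   weights [pbar] and [qbar] separates the pieces: the gradient step expands the
   error by at most [1 + alpha L] since every [f_i'] is [L]-Lipschitz, and the
   perturbation is controlled by the Rayleigh bounds [|A^T u|^2 <= rho(A A^T) |u|^2]
   and [|B w|^2 <= rho(B)^2 |w|^2].  Adding [alpha / beta |lk - lstar|^2 +
   alpha rho(B) |xk - xstar|^2] to both sides turns the one-step bound into a
   [Gamma]-contraction of this Lyapunov sum, which is iterated [T - 1] times.
   The Rayleigh bound comes from maximising the quadratic form on the compact
   unit sphere: a maximiser is an eigenvector. *)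

Section QuadraticForms.
Variable R : realType.

Definition bilin n (S : 'M[R]_n) (u v : 'cV[R]_n) : R := (u^T *m S *m v) 0 0.

Lemma bilinDl n (S : 'M[R]_n) u v w : bilin S (u + v) w = bilin S u w + bilin S v w.
Proof. by rewrite /bilin linearD /= !mulmxDl mxE. Qed.

Lemma bilinDr n (S : 'M[R]_n) u v w : bilin S u (v + w) = bilin S u v + bilin S u w.
Proof. by rewrite /bilin !mulmxDr mxE. Qed.

Lemma bilinZl n (S : 'M[R]_n) a u v : bilin S (a *: u) v = a * bilin S u v.
Proof. by rewrite /bilin linearZ /= -!scalemxAl mxE. Qed.

Lemma bilinZr n (S : 'M[R]_n) a u v : bilin S u (a *: v) = a * bilin S u v.
Proof. by rewrite /bilin -!scalemxAr mxE. Qed.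

Lemma bilinC n (S : 'M[R]_n) u v : S^T = S -> bilin S u v = bilin S v u.
Proof.
move=> symS; rewrite /bilin -[in LHS](trmxK (u^T *m S *m v)) mxE.
by rewrite !trmx_mul !trmxK symS mulmxA.
Qed.

Lemma bilin_subr_scalar n (S : 'M[R]_n) a u v :
  bilin (S - a%:M) u v = bilin S u v - a * bilin 1%:M u v.
Proof.
by rewrite /bilin mulmxBr mulmxBl mul_mx_scalar -scalemxAl mulmx1 !mxE.
Qed.

Lemma bilin1 n (v : 'cV[R]_n) : bilin 1%:M v v = sqnorm v.
Proof.
rewrite /bilin mulmx1 mxE; apply: eq_bigr => i _.
by rewrite mxE expr2.
Qed.

Lemma bilinE n (S : 'M[R]_n) u v :
  bilin S u v = \sum_j (\sum_i u i 0 * S i j) * v j 0.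
Proof.
rewrite /bilin !mxE; apply: eq_bigr => j _; rewrite !mxE; congr (_ * _).
by apply: eq_bigr => i _; rewrite mxE.
Qed.

Lemma sqnorm_ge0 n (v : 'cV[R]_n) : 0 <= sqnorm v.
Proof. by rewrite sumr_ge0 // => i _; rewrite sqr_ge0. Qed.

Lemma sqnorm_eq0 n (v : 'cV[R]_n) : (sqnorm v == 0) = (v == 0).
Proof.
apply/eqP/eqP => [/psumr_eq0P v0|->].
  apply/colP => i; rewrite mxE; apply/eqP; rewrite -sqrf_eq0; apply/eqP.
  by apply: v0 => // j _; rewrite sqr_ge0.
by rewrite /sqnorm big1 // => i _; rewrite mxE expr0n.
Qed.

Lemma sqnormZ n a (v : 'cV[R]_n) : sqnorm (a *: v) = a ^+ 2 * sqnorm v.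
Proof. by rewrite /sqnorm mulr_sumr; apply: eq_bigr => i _; rewrite mxE exprMn. Qed.

Lemma sqnorm_trmx_mul p q (A : 'M[R]_(p, q)) (u : 'cV[R]_p) :
  sqnorm (A^T *m u) = bilin (A *m A^T) u u.
Proof. by rewrite -bilin1 /bilin mulmx1 trmx_mul trmxK !mulmxA. Qed.

Lemma ler_sqnorm_coord n (u v : 'cV[R]_n) c :
  (forall i, u i 0 ^+ 2 <= c * v i 0 ^+ 2) -> sqnorm u <= c * sqnorm v.
Proof. by move=> le_uv; rewrite /sqnorm mulr_sumr; apply: ler_sum => i _. Qed.

Lemma sqnormD_le n (u v : 'cV[R]_n) p : 1 < p ->
  sqnorm (u + v) <= p * sqnorm u + p / (p - 1) * sqnorm v.
Proof.
move=> p1; rewrite /sqnorm !mulr_sumr -big_split; apply: ler_sum => i _ /=.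
rewrite mxE; set a := u i 0; set b := v i 0.
have p1_neq0 : p - 1 != 0 by rewrite subr_eq0 gt_eqF.
have -> : (a + b) ^+ 2 = p * a ^+ 2 + p / (p - 1) * b ^+ 2
                         - ((p - 1) * a - b) ^+ 2 / (p - 1) by field.
by rewrite gerBl divr_ge0 ?sqr_ge0 // subr_ge0 ltW.
Qed.

Lemma bilin_le_sphere n (S : 'M[R]_n) M :
  (forall w, sqnorm w = 1 -> bilin S w w <= M) ->
  forall v, bilin S v v <= M * sqnorm v.
Proof.
move=> le_M v; have [->|v_neq0] := eqVneq v 0.
  by rewrite -(scale0r (0 : 'cV[R]_n)) bilinZl sqnormZ expr0n !mul0r mulr0.
have nv_gt0 : 0 < sqnorm v by rewrite lt_neqAle eq_sym sqnorm_eq0 v_neq0 sqnorm_ge0.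
set s := Num.sqrt (sqnorm v).
have s_gt0 : 0 < s by rewrite sqrtr_gt0.
have s2 : s ^+ 2 = sqnorm v by rewrite sqr_sqrtr // ltW.
have /le_M : sqnorm (s^-1 *: v) = 1 by rewrite sqnormZ exprVn s2 mulVf // gt_eqF.
rewrite bilinZl bilinZr mulrA -expr2 exprVn s2 => le_vM.
by rewrite -[bilin S v v](mulVKf (lt0r_neq0 nv_gt0)) [M * _]mulrC ler_wpM2l // ltW.
Qed.

Lemma bilin_trmx_continuous n (S : 'M[R]_n) :
  continuous (fun u : 'rV[R]_n => bilin S u^T u^T).
Proof.
have -> : (fun u : 'rV[R]_n => bilin S u^T u^T) =
          (fun u => \sum_j (\sum_i u 0 i * S i j) * u 0 j).
  by apply: funext => u; rewrite bilinE; apply: eq_bigr => j _; rewrite mxE;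
     congr (_ * _); apply: eq_bigr => i _; rewrite mxE.
apply: continuous_big => [|j _ u]; first exact: add_continuous.
apply: continuousM; last exact: coord_continuous.
apply: continuous_big => [|i _ {}u]; first exact: add_continuous.
by apply: continuousM; [exact: coord_continuous | exact: cst_continuous].
Qed.

Lemma bilin_max_sphere n (S : 'M[R]_n.+1) :
  exists2 c : 'cV[R]_n.+1, sqnorm c = 1 &
    forall w, sqnorm w = 1 -> bilin S w w <= bilin S c c.
Proof.
pose sphere := [set u : 'rV[R]_n.+1 | sqnorm u^T = 1].
have sphere_neq0 : sphere !=set0.
  exists (delta_mx 0 0); rewrite /sphere /= /sqnorm (bigD1 0) //= big1.
    by rewrite !mxE eqxx expr1n addr0.
  by move=> i /negbTE i0; rewrite !mxE i0 /= expr0n.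
have sphere_compact : compact sphere.
  apply: bounded_closed_compact.
    exists 1; split; first by rewrite realE ler01.
    move=> M M1 u /= u1; rewrite [`|u|]/Num.norm /= mx_normrE.
    apply: bigmax_le => [|[i j] _ /=]; first by rewrite ltW // (lt_trans ltr01).
    rewrite (ord1 i) (le_trans _ (ltW M1)) // -(expr_le1 (n := 2)) //.
    rewrite real_normK ?num_real // -u1 /sqnorm (bigD1 j) //= mxE lerDl.
    by rewrite sumr_ge0 // => k _; rewrite sqr_ge0.
  have -> : sphere = (fun u : 'rV[R]_n.+1 => bilin 1%:M u^T u^T) @^-1` [set 1].
    by apply: funext => u; rewrite /sphere /= bilin1.
  by apply: closed_comp => [u _|]; [exact: bilin_trmx_continuous | exact: closed_eq].
have [c] := EVT_max_rV sphere_neq0 sphere_compact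
              (continuous_subspaceT (@bilin_trmx_continuous _ S)).
rewrite inE => c1 c_max; exists c^T => // w w1.
by rewrite -[w]trmxK; apply: c_max; rewrite inE /sphere /= trmxK.
Qed.

Lemma bilin_nsd_ker n (S : 'M[R]_n) c : S^T = S ->
  (forall v, bilin S v v <= 0) -> bilin S c c = 0 -> S *m c = 0.
Proof.
move=> symS nsdS Scc; set w := S *m c.
have Scw : bilin S c w = sqnorm w.
  by rewrite -bilin1 /bilin mulmx1 trmx_mul symS mulmxA.
apply/eqP; rewrite -sqnorm_eq0 eq_le sqnorm_ge0 andbT leNgt; apply/negP => w_gt0.
have Sww := nsdS w; set P := sqnorm w in Scw w_gt0; set D := bilin S w w in Sww.
(* otherwise the form would be positive at [c + t w] for [t := P / (1 - D)] *)
pose t := P / (1 - D).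
have t_gt0 : 0 < t by rewrite divr_gt0 // subr_gt0 (le_lt_trans Sww) // ltr01.
have tD : t * (1 - D) = P by rewrite divfK // gt_eqF // subr_gt0 (le_lt_trans Sww).
have := nsdS (c + t *: w).
rewrite !(bilinDl, bilinDr, bilinZl, bilinZr) (bilinC w c symS) Scc Scw -/D.
have -> : t * (t * D) = t * t - t * P by rewrite -tD; ring.
have := mulr_gt0 t_gt0 w_gt0; have := mulr_gt0 t_gt0 t_gt0; lra.
Qed.

Lemma eigenvalue_sym_col n (S : 'M[R]_n) a (c : 'cV[R]_n) : S^T = S -> c != 0 ->
  S *m c = a *: c -> eigenvalue S a.
Proof.
move=> symS c_neq0 Sc; apply/eigenvalueP; exists c^T; last by rewrite trmx_eq0.
by rewrite -symS -trmx_mul Sc linearZ.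
Qed.

Lemma rayleigh_le n (S : 'M[R]_n) r : S^T = S ->
  (forall a, eigenvalue S a -> a <= r) -> forall v, bilin S v v <= r * sqnorm v.
Proof.
case: n S => [|n] S symS le_r v.
  by rewrite bilinE /sqnorm !big_ord0 mulr0.
have [c c1 c_max] := bilin_max_sphere S; set M := bilin S c c in c_max.
have le_M := bilin_le_sphere c_max.
have kerSM : (S - M%:M) *m c = 0.
  apply: bilin_nsd_ker.
  - by rewrite linearB /= symS tr_scalar_mx.
  - by move=> u; rewrite bilin_subr_scalar bilin1 subr_le0.
  - by rewrite bilin_subr_scalar bilin1 c1 mulr1 subrr.
have : eigenvalue S M.
  apply: (eigenvalue_sym_col (c := c) symS); first by rewrite -sqnorm_eq0 c1 oner_eq0.
  by apply/eqP; rewrite -subr_eq0 -mul_scalar_mx -mulmxBl kerSM.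
move/le_r => Mr; apply: le_trans (le_M v) _.
by rewrite ler_wpM2r // sqnorm_ge0.
Qed.

Lemma eigenvalue_psd_ge0 n (B : 'M[R]_n) a :
  (forall v, 0 <= bilin B v v) -> eigenvalue B a -> 0 <= a.
Proof.
move=> psdB /eigenvalueP [v vB v_neq0].
have nv_gt0 : 0 < sqnorm v^T.
  by rewrite lt_neqAle eq_sym sqnorm_eq0 trmx_eq0 v_neq0 sqnorm_ge0.
have := psdB v^T.
have -> : bilin B v^T v^T = a * sqnorm v^T.
  by rewrite -bilin1 /bilin trmxK vB mulmx1 -scalemxAl mxE.
by rewrite pmulr_lge0.
Qed.

Lemma eigenvalue_sqr_le n (B : 'M[R]_n) r :
  (forall v, 0 <= bilin B v v) -> (forall a, eigenvalue B a -> a <= r) ->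
  forall mu, eigenvalue (B *m B) mu -> mu <= r ^+ 2.
Proof.
move=> psdB le_r mu /eigenvalueP [v vBB v_neq0].
have [mu_lt0|mu_ge0] := ltP mu 0; first by rewrite (le_trans (ltW mu_lt0)) ?sqr_ge0.
set s := Num.sqrt mu; have s_ge0 : 0 <= s by rewrite sqrtr_ge0.
have ss : s * s = mu by rewrite -expr2 sqr_sqrtr.
(* [v B + s v] is an eigenvector of [B] for [s] unless [v] is one for [- s] *)
set u := v *m B + s *: v.
have uB : u *m B = s *: u.
  by rewrite /u mulmxDl -mulmxA vBB -scalemxAl scalerDr scalerA ss addrC.
have [u0|u_neq0] := eqVneq u 0.
  have : eigenvalue B (- s).
    apply/eigenvalueP; exists v => //.
    by move/eqP: u0; rewrite addr_eq0 => /eqP ->; rewrite scaleNr.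
  move/(eigenvalue_psd_ge0 psdB); rewrite oppr_ge0 => s_le0.
  by rewrite -ss (@le_anti _ _ s 0) ?s_le0 // mulr0 sqr_ge0.
have /le_r s_le_r : eigenvalue B s by apply/eigenvalueP; exists u.
by rewrite -ss expr2 ler_pM.
Qed.

Lemma sqnorm_trmx_mul_le p q (A : 'M[R]_(p, q)) r :
  (forall a, eigenvalue (A *m A^T) a -> a <= r) ->
  forall u, sqnorm (A^T *m u) <= r * sqnorm u.
Proof.
move=> le_r u; rewrite sqnorm_trmx_mul; apply: rayleigh_le le_r _.
by rewrite trmx_mul trmxK.
Qed.

Lemma sqnorm_psd_mul_le n (B : 'M[R]_n) r : B^T = B ->
  (forall v, 0 <= bilin B v v) -> (forall a, eigenvalue B a -> a <= r) ->
  forall w, sqnorm (B *m w) <= r ^+ 2 * sqnorm w.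
Proof.
move=> symB psdB le_r w; rewrite -[in B *m w]symB.
by apply: sqnorm_trmx_mul_le => mu; rewrite symB; exact: eigenvalue_sqr_le.
Qed.

End QuadraticForms.

Section GradientStep.
Variable R : realType.

Lemma derive1_lipschitz (g : R -> R) L :
  (forall x, derivable g x 1) -> (forall x, `|derive1 g x| <= L) ->
  forall a b, `|g b - g a| <= L * `|b - a|.
Proof.
move=> dg le_L.
suff lt_case a b : a < b -> `|g b - g a| <= L * `|b - a|.
  move=> a b; case: (ltgtP a b) => [|ba|->]; first exact: lt_case.
    by rewrite distrC (distrC b); exact: lt_case.
  by rewrite !subrr normr0 mulr0.
move=> ab; have g'_derive x : x \in `]a, b[ -> is_derive x 1 g (derive1 g x).
  by move=> _; rewrite derive1E; exact: derivableP.
have [c _ ->] := MVT ab g'_derive (derivable_within_continuous (fun x _ => dg x)).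
by rewrite normrM ler_wpM2r.
Qed.

Lemma sqnorm_gradient_step_le n (g : 'I_n -> R -> R) L alpha (y z : 'cV[R]_n) :
  0 <= alpha ->
  (forall i a b, `|derive1 (g i) b - derive1 (g i) a| <= L * `|b - a|) ->
  sqnorm ((y - z) - alpha *: (gradf g y - gradf g z))
    <= (1 + alpha * L) ^+ 2 * sqnorm (y - z).
Proof.
move=> alpha_ge0 lip; apply: ler_sqnorm_coord => i; rewrite !mxE.
have := lip i (z i 0) (y i 0).
set d := y i 0 - z i 0; set D := derive1 (g i) _ - _ => le_D.
have le_step : `|d - alpha * D| <= (1 + alpha * L) * `|d|.
  apply: le_trans (ler_normB _ _) _; rewrite normrM ger0_norm //.
  by have := ler_wpM2l alpha_ge0 le_D; lra.
rewrite -[(d - _) ^+ 2]real_normK ?num_real // -[d ^+ 2]real_normK ?num_real //.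
by rewrite -exprMn ler_sqr ?nnegrE // (le_trans _ le_step).
Qed.

End GradientStep.

Lemma ler_geometric_iter (R : realFieldType) (E : nat -> R) a b c G X Y :
  0 <= a -> a <= G -> b <= G -> c <= G -> 0 <= X -> 0 <= Y ->
  (forall t, 0 <= E t) ->
  (forall t, E t.+1 + X + Y <= a * E t + b * X + c * Y) ->
  forall t, E t + X + Y <= G ^+ t * (E 0 + X + Y).
Proof.
move=> a_ge0 aG bG cG X_ge0 Y_ge0 E_ge0 step.
elim=> [|t IH]; first by rewrite expr0 mul1r.
apply: le_trans (step t) _; rewrite exprS -mulrA.
apply: le_trans (ler_wpM2l (le_trans a_ge0 aG) IH); rewrite !mulrDr.
by rewrite !lerD // ler_wpM2r.
Qed.

Section FlexPDG.
Variables (R : realType) (n eps : nat) (f : 'I_n -> R -> R).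
Variables (A : 'M[R]_(eps, n)) (B : 'M[R]_n).
Variables (alpha beta L rhoA rhoB : R).
Variables (xstar xk : 'cV[R]_n) (lstar lk : 'cV[R]_eps).

Hypothesis alpha_gt0 : 0 < alpha.
Hypothesis beta_gt0 : 0 < beta.
Hypothesis grad_lipschitz :
  forall i a b, `|derive1 (f i) b - derive1 (f i) a| <= L * `|b - a|.
Hypothesis sqnorm_AT_le : forall u, sqnorm (A^T *m u) <= rhoA * sqnorm u.
Hypothesis sqnorm_B_le : forall w, sqnorm (B *m w) <= rhoB ^+ 2 * sqnorm w.
Hypothesis saddle : gradf f xstar + A^T *m lstar = 0.
Hypothesis B_xstar : B *m xstar = 0.

Definition flex_step (y : 'cV[R]_n) : 'cV[R]_n :=
  y - alpha *: gradf f y - alpha *: (A^T *m lk) - alpha *: (B *m xk).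

Lemma flex_step_sub y : flex_step y - xstar =
  ((y - xstar) - alpha *: (gradf f y - gradf f xstar))
  + (- alpha) *: (A^T *m (lk - lstar) + B *m (xk - xstar)).
Proof.
have -> : gradf f xstar = - (A^T *m lstar) by apply/eqP; rewrite -addr_eq0 saddle.
rewrite !mulmxBr B_xstar subr0 /flex_step.
move: (gradf f y) (A^T *m lk) (A^T *m lstar) (B *m xk) => g al als bx.
by apply/colP => i; rewrite !mxE; ring.
Qed.

Lemma flex_step_sqnorm_le p q y : 1 < p -> 1 < q ->
  sqnorm (flex_step y - xstar) <=
    p * ((1 + alpha * L) ^+ 2 * sqnorm (y - xstar))
    + p / (p - 1) * (alpha ^+ 2 * (q * (rhoA * sqnorm (lk - lstar))
                     + q / (q - 1) * (rhoB ^+ 2 * sqnorm (xk - xstar)))).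
Proof.
move=> p1 q1; rewrite flex_step_sub.
apply: le_trans (sqnormD_le _ _ p1) _; rewrite sqnormZ sqrrN.
have pp1_ge0 : 0 <= p / (p - 1) by apply: divr_ge0; lra.
have qq1_ge0 : 0 <= q / (q - 1) by apply: divr_ge0; lra.
apply: lerD; apply: ler_wpM2l => //; first lra.
  exact: sqnorm_gradient_step_le (ltW alpha_gt0) grad_lipschitz.
rewrite ler_wpM2l ?sqr_ge0 //; apply: le_trans (sqnormD_le _ _ q1) _.
by rewrite lerD // ler_wpM2l //; lra.
Qed.

Lemma flex_step_lyapunov p q y : 1 < p -> 1 < q ->
  sqnorm (flex_step y - xstar) + alpha / beta * sqnorm (lk - lstar)
    + alpha * rhoB * sqnorm (xk - xstar) <=
  p * (1 + alpha * L) ^+ 2 * sqnorm (y - xstar)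
  + (1 + p * q * alpha * beta * rhoA / (p - 1)) * (alpha / beta * sqnorm (lk - lstar))
  + (1 + p * q * alpha * rhoB / ((p - 1) * (q - 1)))
    * (alpha * rhoB * sqnorm (xk - xstar)).
Proof.
move=> p1 q1; have := flex_step_sqnorm_le y p1 q1.
have p1_neq0 : p - 1 != 0 by rewrite subr_eq0 gt_eqF.
have q1_neq0 : q - 1 != 0 by rewrite subr_eq0 gt_eqF.
have beta_neq0 : beta != 0 by rewrite gt_eqF.
move: (sqnorm (flex_step y - xstar)) (sqnorm (y - xstar)) => Ey Ny.
move: (sqnorm (lk - lstar)) (sqnorm (xk - xstar)) => U W step.
apply: le_trans (lerD (lerD step (lexx _)) (lexx _)) _.
rewrite le_eqVlt; apply/orP; left; apply/eqP.
by field; rewrite p1_neq0 q1_neq0 beta_neq0.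
Qed.

Lemma flex_inner_lyapunov p q t : 1 < p -> 1 < q -> 0 <= rhoB ->
  sqnorm (iter t flex_step xk - xstar) + alpha / beta * sqnorm (lk - lstar)
    + alpha * rhoB * sqnorm (xk - xstar) <=
  Num.max (p * (1 + alpha * L) ^+ 2)
    (Num.max (1 + p * q * alpha * beta * rhoA / (p - 1))
             (1 + p * q * alpha * rhoB / ((p - 1) * (q - 1)))) ^+ t
  * ((1 + alpha * rhoB) * sqnorm (xk - xstar) + alpha / beta * sqnorm (lk - lstar)).
Proof.
move=> p1 q1 rhoB_ge0.
have -> : (1 + alpha * rhoB) * sqnorm (xk - xstar) + alpha / beta * sqnorm (lk - lstar)
  = sqnorm (iter 0 flex_step xk - xstar) + alpha / beta * sqnorm (lk - lstar)
    + alpha * rhoB * sqnorm (xk - xstar) by rewrite /=; ring.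
apply: (ler_geometric_iter (E := fun s => sqnorm (iter s flex_step xk - xstar)))
  (fun s => flex_step_lyapunov _ p1 q1) t.
- by rewrite mulr_ge0 ?sqr_ge0 //; lra.
- by rewrite le_max lexx.
- by rewrite !le_max lexx orbT.
- by rewrite !le_max lexx !orbT.
- by rewrite mulr_ge0 ?sqnorm_ge0 // divr_ge0 // ltW.
- by rewrite !mulr_ge0 ?sqnorm_ge0 // ltW.
- by move=> s; exact: sqnorm_ge0.
Qed.

End FlexPDG.

Theorem lemma3p9 (R : realType) (n eps : nat) (e : 'I_eps -> 'I_n * 'I_n)
  (f : 'I_n -> R -> R) (m L : R) (B : 'M[R]_n)
  (rhoB rhoAA : R) (xstar : 'cV[R]_n) (lstar : 'cV[R]_eps)
  (alpha beta : R) (T : nat) (x0 : 'cV[R]_n) (pbar qbar : R) (k : nat) :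
  simple_edges e -> connected_graph e ->
  0 < m -> m <= L ->
  (forall i x, derivable (f i) x 1 /\ derivable (derive1 (f i)) x 1) ->
  (forall i x, m <= derive1 (derive1 (f i)) x <= L) ->
  B^T = B -> (forall v : 'cV[R]_n, 0 <= (v^T *m B *m v) 0 0) ->
  (forall v : 'cV[R]_n, B *m v = 0 <-> incidence R e *m v = 0) ->
  (forall i j, i != j -> B i j != 0 -> adj e i j) ->
  is_rho B rhoB -> rhoB < m ->
  is_rho (incidence R e *m (incidence R e)^T) rhoAA ->
  incidence R e *m xstar = 0 ->
  (forall x, incidence R e *m x = 0 -> sumf f xstar <= sumf f x) ->
  (forall y, incidence R e *m y = 0 ->
     (forall x, incidence R e *m x = 0 -> sumf f y <= sumf f x) -> y = xstar) ->
  gradf f xstar + (incidence R e)^T *m lstar = 0 ->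
  B *m xstar = 0 ->
  (exists y : 'cV[R]_n, lstar = incidence R e *m y) ->
  0 < alpha -> 0 < beta -> (1 <= T)%N ->
  1 < pbar -> 1 < qbar ->
  let A := incidence R e in
  let xk := (flex_state f A B alpha beta T x0 k).1 in
  let lk := (flex_state f A B alpha beta T x0 k).2 in
  let c1 := 1 + alpha * rhoB in
  let Gamma := Num.max (pbar * (1 + alpha * L) ^+ 2)
                 (Num.max (1 + pbar * qbar * alpha * beta * rhoAA / (pbar - 1))
                          (1 + pbar * qbar * alpha * rhoB / ((pbar - 1) * (qbar - 1)))) in
  sqnorm (flex_inner f A B alpha xk lk T.-1 - xstar)
    + alpha / beta * sqnorm (lk - lstar) + alpha * rhoB * sqnorm (xk - xstar)
  <= Gamma ^+ T.-1 * (c1 * sqnorm (xk - xstar) + alpha / beta * sqnorm (lk - lstar)).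
Proof.
move=> _ _ m_gt0 _ f_derivable f''_bounds symB psdB _ _ [eigB le_rhoB] _
  [_ le_rhoAA] _ _ _ saddle B_xstar _ alpha_gt0 beta_gt0 _ p1 q1.
apply: flex_inner_lyapunov => //.
- move=> i; apply: derive1_lipschitz => x; first exact: (f_derivable i x).2.
  have /andP[m_le L_ge] := f''_bounds i x.
  by rewrite ger0_norm // (le_trans (ltW m_gt0)).
- exact: sqnorm_trmx_mul_le.
- exact: sqnorm_psd_mul_le.
- exact: eigenvalue_psd_ge0 psdB eigB.
Qed.
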